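(* Let $1\gg p\gg q\gg\mu\gg n^{-1}$. Let $G$ be a graph with $n$ vertices and $e(G)\ge pn^2$. Then $G$ has a $q$-cut-dense subgraph of order $\mu n$.
   Context: A graph $F$ is $q$-cut-dense if for every partition $V(F)=A\cup B$ into disjoint sets, the number of edges of $F$ between $A$ and $B$ is at least $q|A||B|$. The hierarchy means: $p$ is sufficiently small; given $p$, $q$ is sufficiently small; given $q$, $\mu$ is sufficiently small; given $\mu$, $n$ is sufficiently large. *)

From mathcomp Require Import all_boot all_order all_algebra.
From mathcomp Require Import reals.
Set Implicit Arguments. Unset Strict Implicit. Unset Printing Implicit Defensive.
Import Order.TTheory GRing.Theory Num.Theory.
Local Open Scope ring_scope.

(* A simple graph is a symmetric irreflexive relation G on a finite vertex type T. *)

Definition edges (T : finType) (G : rel T) : {set {set T}} :=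
  [set E : {set T} | [exists x, [exists y, [&& x != y, G x y & E == [set x; y]]]]].

Definition is_subgraph (T : finType) (G : rel T) (S : {set T}) (F : rel T) : Prop :=
  [/\ forall x y, F x y -> G x y,
      forall x y, F x y -> (x \in S) && (y \in S)
    & symmetric F].

Definition cut_edges (T : finType) (F : rel T) (A B : {set T}) : nat :=
  #|[set p : T * T | [&& p.1 \in A, p.2 \in B & F p.1 p.2]]|.

Definition cut_dense (R : realType) (q : R) (T : finType) (S : {set T}) (F : rel T) : Prop :=
  forall A B : {set T}, [disjoint A & B] -> A :|: B = S ->
    q * (#|A|%:R) * (#|B|%:R) <= (cut_edges F A B)%:R.

(* Give a vertex set X of an n-vertex graph the density d(X) = e(X) / (|X| (|X| + n)),
   where e(X) counts ordered adjacent pairs in X, and take S of maximal density M.  Since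
   (a + b)(a + b + n) = a(a + n) + b(b + n) + 2ab, splitting S into A and B and using
   d(A), d(B) <= M leaves at least M|A||B| edges across the cut, so G[S] is M-cut-dense.
   Moreover M >= d(V(G)) >= e(G)/n^2 >= p, and e(S) <= |S|^2 forces M n <= |S|. *)

From mathcomp Require Import all_boot all_order all_algebra.
From mathcomp Require Import reals.
From mathcomp Require Import zify lra.
Import Order.TTheory GRing.Theory Num.Theory.
Set Implicit Arguments. Unset Strict Implicit. Unset Printing Implicit Defensive.

Definition cross_count (T : finType) (G : rel T) (A B : {set T}) : nat :=
  \sum_(x in A) \sum_(y in B) (G x y : nat).

Definition edge_count (T : finType) (G : rel T) (X : {set T}) : nat :=
  cross_count G X X.

Definition induced (T : finType) (G : rel T) (S : {set T}) : rel T :=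
  fun x y => [&& x \in S, y \in S & G x y].

Section Counting.

Variables (T : finType) (G : rel T).

Lemma cut_edgesE (A B : {set T}) : cut_edges G A B = cross_count G A B.
Proof.
rewrite /cut_edges /cross_count pair_big_dep /= -sum1_card.
rewrite [RHS]big_mkcond [LHS]big_mkcond /=.
apply: eq_bigr => -[x y] _; rewrite inE /=.
by case: (x \in A); case: (y \in B); case: (G x y).
Qed.

Lemma cross_countUl (A B C : {set T}) : [disjoint A & B] ->
  cross_count G (A :|: B) C = cross_count G A C + cross_count G B C.
Proof. by move=> dAB; rewrite /cross_count -bigU //; apply: eq_bigl => x; rewrite !inE. Qed.

Lemma cross_countUr (A B C : {set T}) : [disjoint B & C] ->
  cross_count G A (B :|: C) = cross_count G A B + cross_count G A C.
Proof.
move=> dBC; rewrite /cross_count -big_split /=.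
by apply: eq_bigr => x _; rewrite -bigU //; apply: eq_bigl => y; rewrite !inE.
Qed.

Lemma cross_countC (A B : {set T}) : symmetric G ->
  cross_count G B A = cross_count G A B.
Proof.
move=> sG; rewrite /cross_count exchange_big.
by apply: eq_bigr => x _; apply: eq_bigr => y _; rewrite sG.
Qed.

Lemma edge_countU (A B : {set T}) : symmetric G -> [disjoint A & B] ->
  edge_count G (A :|: B) = edge_count G A + edge_count G B + 2 * cross_count G A B.
Proof.
move=> sG dAB; rewrite /edge_count cross_countUl // !cross_countUr //.
by rewrite (cross_countC B A sG); lia.
Qed.

Lemma edge_count_le_sq (X : {set T}) : (edge_count G X <= #|X| * #|X|)%N.
Proof.
rewrite /edge_count /cross_count -[X in (X * _)%N]sum1_card big_distrl /=.
apply: leq_sum => x _; rewrite mul1n -sum1_card.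
by apply: leq_sum => y _; case: (G x y).
Qed.

Lemma edge_count_card0 (X : {set T}) : #|X| = 0%N -> edge_count G X = 0%N.
Proof. by move=> /eqP; rewrite cards_eq0 => /eqP ->; rewrite /edge_count /cross_count big_set0. Qed.

Lemma edges_double_le : symmetric G -> irreflexive G ->
  (2 * #|edges G| <= edge_count G [set: T])%N.
Proof.
move=> sG iG.
have -> : edge_count G [set: T] = \sum_(p : T * T | G p.1 p.2) 1%N.
  rewrite /edge_count /cross_count pair_big_dep /= big_mkcond [RHS]big_mkcond /=.
  by apply: eq_bigr => -[x y] _ /=; rewrite !inE /=; case: (G x y).
rewrite (partition_big (fun p : T * T => [set p.1; p.2]) (mem (edges G))) /=; last first.
  move=> [x y] /= Gxy; rewrite inE; apply/existsP; exists x; apply/existsP; exists y.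
  by rewrite Gxy eqxx !andbT; apply: contraTneq Gxy => ->; rewrite iG.
rewrite -sum1_card big_distrr /=.
apply: leq_sum => E; rewrite inE => /existsP [x /existsP [y /and3P [nxy Gxy /eqP ->]]].
rewrite muln1 (bigD1 (x, y)) /=; last by rewrite Gxy eqxx.
rewrite (bigD1 (y, x)) //= setUC eqxx andbT sG Gxy /=.
by apply: contra nxy => /eqP[->].
Qed.

Lemma induced_subgraph (S : {set T}) : symmetric G -> is_subgraph G S (induced G S).
Proof.
move=> sG; split.
- by move=> x y /and3P[].
- by move=> x y /and3P[-> ->].
- by move=> x y; rewrite /induced sG andbCA.
Qed.

Lemma cross_count_induced (S A B : {set T}) : A \subset S -> B \subset S ->
  cross_count (induced G S) A B = cross_count G A B.
Proof.
move=> /subsetP sAS /subsetP sBS; apply: eq_bigr => x xA; apply: eq_bigr => y yB.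
by rewrite /induced sAS ?sBS.
Qed.

End Counting.

Local Open Scope ring_scope.

Section Density.

Variables (R : realFieldType) (T : finType) (G : rel T) (n : nat).

Definition weight (X : {set T}) : nat := #|X| * (#|X| + n).

(* For X empty the weight is 0 and so is the density, since x / 0 = 0. *)
Definition density (X : {set T}) : R := (edge_count G X)%:R / (weight X)%:R.

Lemma weightU (A B : {set T}) : [disjoint A & B] ->
  weight (A :|: B) = (weight A + weight B + 2 * (#|A| * #|B|))%N.
Proof.
move=> dAB; rewrite /weight cardsU (disjoint_setI0 dAB) cards0 subn0.
by rewrite !mulnDl !mulnDr; lia.
Qed.

Lemma weight_gt0 (X : {set T}) : (0 < #|X|)%N -> (0 < weight X)%N.
Proof. by move=> X0; rewrite muln_gt0 X0 addn_gt0 X0. Qed.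

Lemma density_ge0 (X : {set T}) : 0 <= density X.
Proof. by rewrite divr_ge0. Qed.

Lemma edge_count_density (X : {set T}) : (0 < #|X|)%N ->
  (edge_count G X)%:R = density X * (weight X)%:R.
Proof. by move=> X0; rewrite divfK // pnatr_eq0 -lt0n weight_gt0. Qed.

Lemma edge_count_le_weight (M : R) (X : {set T}) : density X <= M ->
  (edge_count G X)%:R <= M * (weight X)%:R.
Proof.
have [X0 _|X0] := posnP #|X|; first by rewrite edge_count_card0 // /weight X0 mul0n mulr0.
by rewrite -ler_pdivrMr ?ltr0n ?weight_gt0.
Qed.

Lemma density_mul_le_card (X : {set T}) : density X * n%:R <= #|X|%:R.
Proof.
have [X0|X0] := posnP #|X|; first by rewrite /density /weight X0 mul0n invr0 mulr0 mul0r.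
have := edge_count_le_sq G X; rewrite -(ler_nat R) natrM edge_count_density //.
rewrite /weight natrM natrD mulrCA mulrC ler_pM2r ?ltr0n //.
by have := density_ge0 X; have := ler0n R #|X|; nra.
Qed.

Lemma edges_le_density_setT : symmetric G -> irreflexive G -> #|T| = n ->
  (#|edges G|)%:R <= density [set: T] * n%:R ^+ 2.
Proof.
move=> sG iG cT; have [n0|n0] := posnP n.
  have := leq_trans (edges_double_le sG iG) (edge_count_le_sq G _).
  by rewrite cardsT cT n0 leqn0 muln_eq0 /= => /eqP->; rewrite expr0n mulr0.
have := edges_double_le sG iG; rewrite -(ler_nat R) natrM edge_count_density; last first.
  by rewrite cardsT cT.
by rewrite /weight cardsT cT natrM natrD expr2; lra.
Qed.

End Density.

Lemma densest_cut_dense (R : realType) (T : finType) (G : rel T) (n : nat) (S : {set T}) :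
  symmetric G -> (forall X, density R G n X <= density R G n S) ->
  cut_dense (density R G n S) S (induced G S).
Proof.
move=> sG Smax A B dAB defS; set M := density R G n S.
have sAS : A \subset S by rewrite -defS subsetUl.
have sBS : B \subset S by rewrite -defS subsetUr.
rewrite cut_edgesE cross_count_induced //.
have [S0|S0] := posnP #|S|.
  have /eqP := S0; rewrite -defS cards_eq0 => /eqP AB0.
  by have := subsetUl A B; rewrite AB0 subset0 => /eqP->; rewrite cards0 mulr0 mul0r.
have eS := edge_count_density R G n S0.
have eA := edge_count_le_weight (Smax A).
have eB := edge_count_le_weight (Smax B).
have eAB := edge_countU sG dAB; have wAB := weightU n dAB; rewrite defS in eAB wAB.
move: eS eA eB; rewrite eAB wAB -/M !natrD !natrM !mulrDr.
lra.
Qed.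

Lemma cut_dense_le (R : realType) (T : finType) (q q' : R) (S : {set T}) (F : rel T) :
  q <= q' -> cut_dense q' S F -> cut_dense q S F.
Proof.
move=> qq' dense A B dAB defS; apply: le_trans (dense A B dAB defS).
by rewrite -!mulrA ler_wpM2r // mulr_ge0.
Qed.

Theorem lemma3p14 (R : realType) :
  exists p0 : R, 0 < p0 /\ forall p : R, 0 < p <= p0 ->
  exists q0 : R, 0 < q0 /\ forall q : R, 0 < q <= q0 ->
  exists mu0 : R, 0 < mu0 /\ forall mu : R, 0 < mu <= mu0 ->
  exists n0 : nat, forall n : nat, (n0 <= n)%N ->
  forall (T : finType) (G : rel T),
    #|T| = n -> symmetric G -> irreflexive G ->
    p * (n%:R ^+ 2) <= (#|edges G|)%:R ->
    exists (S : {set T}) (F : rel T),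
      [/\ is_subgraph G S F, cut_dense q S F & mu * n%:R <= (#|S|)%:R].
Proof.
exists 1; split => // p /andP[p_gt0 _].
exists p; split => // q /andP[_ qp].
exists p; split => // mu /andP[_ mup].
exists 1%N => n n0 T G cT sG iG hE.
have [S _ Smax] := arg_maxP (density R G n) (i0 := setT) (P := predT) isT.
have {}Smax X : density R G n X <= density R G n S := Smax X isT.
set M := density R G n S.
have pM : p <= M.
  rewrite -(ler_pM2r (_ : 0 < n%:R ^+ 2)) ?exprn_gt0 ?ltr0n //.
  apply: le_trans hE (le_trans (edges_le_density_setT R sG iG cT) _).
  by rewrite ler_wpM2r ?sqr_ge0 ?Smax.
exists S, (induced G S); split.
- exact: induced_subgraph.
- exact: cut_dense_le (le_trans qp pM) (densest_cut_dense sG Smax).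
- apply: le_trans (density_mul_le_card R G n S).
  by rewrite ler_wpM2r // (le_trans mup pM).
Qed.
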